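(* Let $\kappa$ be an uncountable regular cardinal, $U$ an unbounded subset of $\kappa$, and $T$ a subtree of ${}^{<\kappa}\kappa$. If $\mu$ is a cardinal with $\mu^{<\kappa}<|[T]|$ and $c:{}^\kappa\mu\to[T]$ is a continuous surjection, then there are a strictly increasing sequence $\langle\lambda_n\in U : n<\omega\rangle$ with least upper bound $\lambda$ and an injection $i:\prod_{n<\omega}\lambda_n\to T(\lambda)$ such that for all $x,y\in\prod_{n<\omega}\lambda_n$ and all $n<\omega$: $x\restriction n=y\restriction n$ if and only if $i(x)\restriction\lambda_n=i(y)\restriction\lambda_n$.
   Context: ${}^{<\kappa}\kappa$ is the set of functions from ordinals $\alpha<\kappa$ to $\kappa$, ordered by inclusion; a subtree is a subset closed under restrictions to smaller ordinals. $[T]$ is the set of $x\in{}^\kappa\kappa$ with $x\restriction\alpha\in T$ for all $\alpha<\kappa$, with the subspace topology of ${}^\kappa\kappa$. $T(\lambda)$ denotes the set of nodes of $T$ of length $\lambda$. For a cardinal $\nu$, ${}^\kappa\nu$ carries the topology with basic open sets $N_s=\{x\in{}^\kappa\nu : s\subseteq x\}$ for $s$ a function from an ordinal below $\kappa$ to $\nu$. *)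

(* Generalized Baire spaces over an abstract well-ordered type K
   representing the (initial) ordinal kappa; elements of K are the ordinals < kappa. *)
From Stdlib Require Import Classical.
Set Implicit Arguments.

Section Defs.
Variable K : Type.
Variable lt : K -> K -> Prop.

Definition le (a b : K) : Prop := lt a b \/ a = b.

Definition strict_well_order : Prop :=
  (forall a, ~ lt a a) /\
  (forall a b c, lt a b -> lt b c -> lt a c) /\
  (forall a b, lt a b \/ a = b \/ lt b a) /\
  well_founded lt.

Definition seg (a : K) : Type := { b : K | lt b a }.

Definition le_card (A B : Type) : Prop :=
  exists f : A -> B, forall x y, f x = f y -> x = y.
Definition lt_card (A B : Type) : Prop := le_card A B /\ ~ le_card B A.

Definition is_cardinal : Prop := forall a : K, ~ le_card K (seg a).
Definition uncountable : Prop := ~ le_card K nat.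
Definition regular : Prop :=
  forall (a : K) (f : seg a -> K), exists g : K, forall b, lt (f b) g.

Definition uncountable_regular_cardinal : Prop :=
  strict_well_order /\ is_cardinal /\ uncountable /\ regular.

Definition unbounded (U : K -> Prop) : Prop := forall a, exists b, U b /\ lt a b.

(* nodes of {}^{<kappa} X: functions from an ordinal alpha < kappa to X *)
Definition node (X : Type) : Type := { a : K & seg a -> X }.
Definition len {X} (s : node X) : K := projT1 s.
Definition val {X} (s : node X) : seg (len s) -> X := projT2 s.

Definition prefix {X} (t s : node X) : Prop :=
  le (len t) (len s) /\
  forall c (h1 : lt c (len t)) (h2 : lt c (len s)),
    val t (exist _ c h1) = val s (exist _ c h2).

Definition restr {X} (x : K -> X) (a : K) : node X :=
  existT (fun a => seg a -> X) a (fun b => x (proj1_sig b)).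

Definition subtree (T : node K -> Prop) : Prop :=
  forall s t, prefix t s -> T s -> T t.

Definition branches (T : node K -> Prop) : Type :=
  { x : K -> K | forall a, T (restr x a) }.

Definition N {X} (s : node X) (y : K -> X) : Prop :=
  forall c (h : lt c (len s)), val s (exist _ c h) = y c.

Definition open {X} (V : (K -> X) -> Prop) : Prop :=
  forall x, V x -> exists s : node X, N s x /\ (forall y, N s y -> V y).

(* continuity of c : {}^kappa M -> [T], [T] carrying the subspace topology of
   {}^kappa kappa: preimages of (traces on [T] of) open sets are open *)
Definition continuous {M} {T : node K -> Prop} (c : (K -> M) -> branches T) : Prop :=
  forall V : (K -> K) -> Prop, open V -> open (fun z => V (proj1_sig (c z))).

End Defs.

(* Call a node [u] of [{}^{<kappa} mu] small when [c[N_u]] injects into the set of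
   extensions of [u].  As [mu^{<kappa} < |[T]|] and [c] is onto, the empty node is
   not small.  If [u] is not small, the images of the branches through [u] all of
   whose restrictions above [u] are non-small cannot be listed in fewer than
   [kappa] steps: otherwise lengths of restrictions (for these images) and
   minimal small extensions (for all other images) would make [u] small.  So [u]
   has [kappa] such branches with distinct images; by regularity fewer than
   [kappa] of these images are already separated below some ordinal, and by
   continuity each image is frozen below any given [lambda] on a long enough
   restriction.  Repeating this [omega] times, with [lambda_{n+1}] in [U] above
   all separation points of stage [n] (a bound exists by regularity), gives
   nodes [t_n(x)] increasing in [n]; [i(x)] is the image of a branch through all
   [t_n(x)], cut at [lambda = sup lambda_n], which is below [kappa] because
   [kappa] is regular and uncountable. *)

From Stdlib Require Import Classical ClassicalEpsilon FunctionalExtensionality ProofIrrelevance PeanoNat Lia.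

Lemma partial_choice {A B} (P : A -> Prop) (R : A -> B -> Prop) :
  inhabited B -> (forall a, P a -> exists b, R a b) ->
  exists f : A -> B, forall a, P a -> R a (f a).
Proof.
  intros [b0] H.
  destruct (choice (fun a b => P a -> R a b)) as [f Hf]; [|exists f; exact Hf].
  intro a. destruct (classic (P a)) as [Ha|Ha].
  - destruct (H a Ha) as [b Hb]. exists b. auto.
  - exists b0. tauto.
Qed.

Lemma nat_dependent_choice {A} (P : nat -> A -> Prop) (R : nat -> A -> A -> Prop) :
  (exists a, P 0 a) -> (forall n a, P n a -> exists a', P (S n) a' /\ R n a a') ->
  exists f : nat -> A, forall n, P n (f n) /\ R n (f n) (f (S n)).
Proof.
  intros [a0 H0] Hstep.
  destruct (partial_choice (fun na : nat * A => P (fst na) (snd na))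
              (fun na a' => P (S (fst na)) a' /\ R (fst na) (snd na) a') (inhabits a0))
    as [next Hnext].
  { intros [n a]. apply Hstep. }
  pose (f := fix f n := match n with 0 => a0 | S n => next (n, f n) end).
  assert (Hf : forall n, P n (f n)).
  { induction n as [|n IH]; [exact H0 | exact (proj1 (Hnext (n, f n) IH))]. }
  exists f. intro n. split; [apply Hf | exact (proj2 (Hnext (n, f n) (Hf n)))].
Qed.

Definition upd {A} (x : nat -> A) n a : nat -> A :=
  fun m => if Nat.eq_dec m n then a else x m.

Lemma upd_eq {A} (x : nat -> A) n a : upd x n a n = a.
Proof. unfold upd. destruct (Nat.eq_dec n n); congruence. Qed.

Lemma upd_ne {A} (x : nat -> A) n a m : m <> n -> upd x n a m = x m.
Proof. unfold upd. destruct (Nat.eq_dec m n); congruence. Qed.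

Section Kappa.
Context {K : Type} {lt : K -> K -> Prop}.
Hypothesis Hwo : strict_well_order lt.

Lemma lt_irrefl a : ~ lt a a.
Proof. exact (proj1 Hwo a). Qed.

Lemma lt_trans a b c : lt a b -> lt b c -> lt a c.
Proof. exact (proj1 (proj2 Hwo) a b c). Qed.

Lemma lt_total a b : lt a b \/ a = b \/ lt b a.
Proof. exact (proj1 (proj2 (proj2 Hwo)) a b). Qed.

Lemma le_refl a : le lt a a.
Proof. right; reflexivity. Qed.

Lemma lt_le_trans a b c : lt a b -> le lt b c -> lt a c.
Proof. intros H [H'| <-]; [exact (lt_trans _ _ _ H H') | exact H]. Qed.

Lemma le_lt_trans a b c : le lt a b -> lt b c -> lt a c.
Proof. intros [H| ->] H'; [exact (lt_trans _ _ _ H H') | exact H']. Qed.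

Lemma le_trans a b c : le lt a b -> le lt b c -> le lt a c.
Proof. intros [H| ->] H'; [left; exact (lt_le_trans _ _ _ H H') | exact H']. Qed.

Lemma le_not_lt a b : le lt a b -> ~ lt b a.
Proof. intros H H'. exact (lt_irrefl a (le_lt_trans _ _ _ H H')). Qed.

Lemma not_le_lt a b : ~ le lt a b -> lt b a.
Proof. intros H. destruct (lt_total a b) as [h|[h|h]]; [|subst|]; firstorder. Qed.

Lemma not_lt_le a b : ~ lt a b -> le lt b a.
Proof. intros H. destruct (lt_total a b) as [h|[h|h]]; [contradiction | right | left]; auto. Qed.

Lemma le_total a b : le lt a b \/ le lt b a.
Proof. destruct (lt_total a b) as [h|[h|h]]; [left; left | left; right | right; left]; exact h. Qed.

Lemma le_antisym a b : le lt a b -> le lt b a -> a = b.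
Proof. intros [H|H] H'; [exfalso; exact (le_not_lt _ _ H' H) | exact H]. Qed.

Lemma least_exists (P : K -> Prop) :
  (exists a, P a) -> exists a, P a /\ forall b, P b -> le lt a b.
Proof.
  intros [a Ha]. apply NNPP; intro Hn.
  assert (Hnone : forall x, ~ P x).
  { intro x. induction x as [x IH] using (well_founded_ind (proj2 (proj2 (proj2 Hwo)))).
    intro Px. apply Hn. exists x. split; [exact Px|]. intros b Pb.
    apply NNPP; intro hb. exact (IH b (not_le_lt _ _ hb) Pb). }
  exact (Hnone a Ha).
Qed.

Lemma upper_bound2 a b : exists m, le lt a m /\ le lt b m.
Proof.
  destruct (le_total a b) as [h|h]; [exists b | exists a]; split; auto using le_refl.
Qed.

Lemma wf_rec_choice {A} (a0 : A) (P : K -> (K -> A) -> A -> Prop) :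
  (forall a h h' v, (forall b, lt b a -> h b = h' b) -> P a h v -> P a h' v) ->
  (forall a h, exists v, P a h v) ->
  exists F : K -> A, forall a, P a F (F a).
Proof.
  intros Hext Hex.
  pose (ext := fun a (rec : forall b, lt b a -> A) (b : K) =>
          match excluded_middle_informative (lt b a) with left p => rec b p | right _ => a0 end).
  pose (F := Fix (proj2 (proj2 (proj2 Hwo))) (fun _ => A)
               (fun a rec => epsilon (inhabits a0) (P a (ext a rec)))).
  exists F. intro a.
  assert (E : F a = epsilon (inhabits a0) (P a (ext a (fun b _ => F b)))).
  { unfold F at 1. rewrite Fix_eq; [reflexivity|].
    intros x f g Hfg. do 2 f_equal. unfold ext. apply functional_extensionality.
    intro b. destruct (excluded_middle_informative (lt b x)); auto. }
  rewrite E. eapply Hext; [|apply epsilon_spec, Hex].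
  intros b hb. unfold ext. destruct (excluded_middle_informative (lt b a)); tauto.
Qed.

Lemma transfinite_injection {X} (P : X -> Prop) : inhabited X ->
  (forall a (f : K -> X), exists y, P y /\ forall e, lt e a -> f e <> y) ->
  exists F : K -> X, (forall a, P (F a)) /\ forall a a', F a = F a' -> a = a'.
Proof.
  intros [x0] Hex.
  destruct (wf_rec_choice x0 (fun a h v => P v /\ forall e, lt e a -> h e <> v)) as [F HF].
  { intros a h h' v Hhh [Pv Hv]. split; [exact Pv|]. intros e he. rewrite <- Hhh by exact he. auto. }
  { exact Hex. }
  exists F. split; [intro a; apply HF|].
  intros a a' E. destruct (lt_total a a') as [h|[h|h]]; [exfalso| exact h | exfalso].
  - exact (proj2 (HF a') a h E).
  - exact (proj2 (HF a) a' h (eq_sym E)).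
Qed.

Lemma node_ext {X} (u v : node lt X) : len u = len v ->
  (forall d h h', val u (exist _ d h) = val v (exist _ d h')) -> u = v.
Proof.
  destruct u as [a f], v as [b g]; unfold len, val; simpl. intros <- H.
  f_equal. apply functional_extensionality. intros [d h]. apply H.
Qed.

Lemma prefix_refl {X} (u : node lt X) : prefix u u.
Proof. split; [apply le_refl|]. intros d h h'. do 2 f_equal. apply proof_irrelevance. Qed.

Lemma prefix_trans {X} (u v w : node lt X) : prefix u v -> prefix v w -> prefix u w.
Proof.
  intros [Huv Huv'] [Hvw Hvw']. split; [exact (le_trans _ _ _ Huv Hvw)|].
  intros d h h'. rewrite (Huv' d h (lt_le_trans _ _ _ h Huv)). apply Hvw'.
Qed.

Lemma prefix_of_common {X} (u v w : node lt X) :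
  prefix u w -> prefix v w -> le lt (len u) (len v) -> prefix u v.
Proof.
  intros [Huw Huw'] [Hvw Hvw'] Hl. split; [exact Hl|]. intros d h h'.
  rewrite (Huw' d h (lt_le_trans _ _ _ h' Hvw)). symmetry. apply Hvw'.
Qed.

Lemma N_restr {X} (z : K -> X) b : N (restr lt z b) z.
Proof. intros d h. reflexivity. Qed.

Lemma N_prefix {X} (u v : node lt X) z : prefix u v -> N v z -> N u z.
Proof. intros [Huv Huv'] Hv d h. rewrite (Huv' d h (lt_le_trans _ _ _ h Huv)). apply Hv. Qed.

Lemma prefix_restr {X} (u : node lt X) z b : N u z -> le lt (len u) b -> prefix u (restr lt z b).
Proof. intros Hu Hb. split; [exact Hb|]. intros d h h'. apply Hu. Qed.

Lemma prefix_restr_eq {X} (u : node lt X) z b : prefix u (restr lt z b) -> u = restr lt z (len u).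
Proof.
  intros [Hl Hu]. apply node_ext; [reflexivity|]. intros d h h'.
  exact (Hu d h (lt_le_trans _ _ _ h Hl)).
Qed.

Lemma chain_limit {X} (u : nat -> node lt X) : inhabited X ->
  (forall n, prefix (u n) (u (S n))) -> exists z, forall n, N (u n) z.
Proof.
  intros HX Hu.
  assert (Hchain : forall n k, n <= k -> prefix (u n) (u k)).
  { intros n k h. induction h; [apply prefix_refl | exact (prefix_trans _ _ _ IHh (Hu m))]. }
  exists (fun d => epsilon HX (fun v => exists n (h : lt d (len (u n))), val (u n) (exist _ d h) = v)).
  intros n d h.
  destruct (epsilon_spec HX (fun v => exists n (h : lt d (len (u n))), val (u n) (exist _ d h) = v)
              (ex_intro _ _ (ex_intro _ n (ex_intro _ h eq_refl)))) as [k [h' <-]].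
  destruct (Nat.le_ge_cases n k) as [hk|hk]; [apply (Hchain n k hk) | symmetry; apply (Hchain k n hk)].
Qed.

Lemma empty_node_exists {X} : inhabited K -> exists r : node lt X, forall z, N r z.
Proof.
  intros [k]. destruct (least_exists (fun _ => True)) as [k0 [_ Hk0]]; [eauto|].
  exists (existT (fun a => seg lt a -> X) k0
            (fun b => False_rect X (le_not_lt _ _ (Hk0 (proj1_sig b) I) (proj2_sig b)))).
  intros z d h. exfalso. exact (le_not_lt _ _ (Hk0 d I) h).
Qed.

Definition in_box (L : nat -> K) n (x : nat -> K) : Prop := forall m, m < n -> lt (x m) (L m).
Definition in_prod (lam : nat -> K) (x : nat -> K) : Prop := forall m, lt (x m) (lam m).
Definition depends {A} n (F : (nat -> K) -> A) : Prop :=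
  forall x y, (forall m, m < n -> x m = y m) -> F x = F y.

Hypothesis Hreg : regular lt.
Hypothesis Hnomax : forall a, exists b, lt a b.
Hypothesis Hunc : uncountable K.

Lemma injection_above a0 :
  exists h : K -> K, (forall a, le lt a0 (h a)) /\ forall a a', h a = h a' -> a = a'.
Proof.
  apply (transfinite_injection (fun v => le lt a0 v) (inhabits a0)).
  intros a f. destruct (Hreg a (fun b => f (proj1_sig b))) as [g Hg].
  destruct (upper_bound2 a0 g) as [m [Hm1 Hm2]].
  exists m. split; [exact Hm1|]. intros e he E.
  apply (lt_irrefl m). rewrite <- E at 1. exact (lt_le_trans _ _ _ (Hg (exist _ e he)) Hm2).
Qed.

Lemma separation_bound {X} (p : K -> K -> X) : (forall a a', p a = p a' -> a = a') ->
  forall nu, exists g, forall a a', lt a nu -> lt a' nu -> a <> a' ->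
    exists d, lt d g /\ p a d <> p a' d.
Proof.
  intros Hp nu.
  destruct (partial_choice (fun aa : K * K => fst aa <> snd aa)
              (fun aa d => p (fst aa) d <> p (snd aa) d) (inhabits nu)) as [D HD].
  { intros [a a'] hne. apply NNPP; intro Hn. apply hne, Hp, functional_extensionality.
    intro d. apply NNPP; intro h. apply Hn. exists d. exact h. }
  destruct (choice (fun a g => forall b, lt b a -> lt (D (b, a)) g)) as [de Hde].
  { intro a. destruct (Hreg a (fun b => D (proj1_sig b, a))) as [g Hg].
    exists g. intros b hb. exact (Hg (exist _ b hb)). }
  destruct (Hreg nu (fun b => de (proj1_sig b))) as [g Hg].
  exists g. intros a a' ha ha' hne.
  destruct (lt_total a a') as [h|[h|h]]; [|contradiction|].
  - exists (D (a, a')). split; [|exact (HD (a, a') hne)].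
    exact (lt_trans _ _ _ (Hde a' a h) (Hg (exist _ a' ha'))).
  - exists (D (a', a)). split; [|intro E; exact (HD (a', a) (not_eq_sym hne) (eq_sym E))].
    exact (lt_trans _ _ _ (Hde a a' h) (Hg (exist _ a ha))).
Qed.

Lemma box_bounded L n (F : (nat -> K) -> K) :
  depends n F -> exists B, forall x, in_box L n x -> lt (F x) B.
Proof.
  revert F; induction n as [|n IH]; intros F HF.
  - destruct (Hnomax (F (fun _ => L 0))) as [B HB]. exists B. intros x _.
    rewrite (HF x (fun _ => L 0)) by lia. exact HB.
  - destruct (choice (fun (f : K -> K) g => forall b, lt b (L n) -> lt (f b) g)) as [G HG].
    { intro f. destruct (Hreg (L n) (fun b => f (proj1_sig b))) as [g Hg].
      exists g. intros b hb. exact (Hg (exist _ b hb)). }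
    destruct (IH (fun x => G (fun b => F (upd x n b)))) as [B HB].
    { intros x y Hxy. f_equal. apply functional_extensionality. intro b. apply HF.
      intros m hm. unfold upd. destruct (Nat.eq_dec m n); [reflexivity | apply Hxy; lia]. }
    exists B. intros x Hx.
    assert (Ex : F x = F (upd x n (x n))).
    { apply HF. intros m _. unfold upd. destruct (Nat.eq_dec m n); congruence. }
    rewrite Ex. apply (lt_trans _ _ _ (HG (fun b => F (upd x n b)) (x n) (Hx n (Nat.lt_succ_diag_r n)))).
    apply HB. intros m hm. apply Hx. lia.
Qed.

Lemma uncountable_inhabited : inhabited K.
Proof.
  apply NNPP; intro H. apply Hunc.
  exists (fun k => False_rect nat (H (inhabits k))). intros k. exfalso. exact (H (inhabits k)).
Qed.

Lemma omega_enumeration : exists e : nat -> K,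
  (forall n, lt (e n) (e (S n))) /\ forall k n, le lt k (e n) -> exists m, e m = k.
Proof.
  destruct uncountable_inhabited as [k].
  destruct (least_exists (fun _ => True)) as [k0 [_ Hk0]]; [eauto|].
  destruct (choice (fun a b => lt a b /\ forall c, lt a c -> le lt b c)) as [succ Hsucc].
  { intro a. destruct (least_exists (lt a) (Hnomax a)) as [b Hb]. exists b. exact Hb. }
  pose (e := fix e n := match n with 0 => k0 | S n => succ (e n) end).
  exists e. split.
  - intro n. apply Hsucc.
  - intros k' n; revert k'; induction n as [|n IH]; intros k' hk.
    + exists 0. exact (le_antisym _ _ (Hk0 k' I) hk).
    + destruct (classic (le lt k' (e n))) as [h|h]; [exact (IH k' h)|].
      exists (S n). apply le_antisym; [exact (proj2 (Hsucc _) k' (not_le_lt _ _ h)) | exact hk].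
Qed.

Lemma omega_injects_below : exists a (e : nat -> K), (forall n m, e n = e m -> n = m) /\ forall n, lt (e n) a.
Proof.
  destruct omega_enumeration as [e [He Hinit]].
  assert (Hmono : forall n m, n < m -> lt (e n) (e m)).
  { intros n m h. induction h; [apply He | exact (lt_trans _ _ _ IHh (He m))]. }
  assert (Hinj : forall n m, e n = e m -> n = m).
  { intros n m E. destruct (Nat.lt_trichotomy n m) as [h|[h|h]]; [|exact h|];
      pose proof (Hmono _ _ h) as Q; rewrite E in Q; exfalso; exact (lt_irrefl _ Q). }
  apply NNPP; intro Hn. apply Hunc.
  (* otherwise [e] enumerates all of [K] *)
  assert (Hall : forall k, exists n, e n = k).
  { intro k. apply NNPP; intro Hk. apply Hn. exists k, e. split; [exact Hinj|].
    intro n. apply NNPP; intro h. apply Hk. exact (Hinit k n (not_lt_le _ _ h)). }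
  exists (fun k => epsilon (inhabits 0) (fun n => e n = k)). intros k k' E.
  rewrite <- (epsilon_spec (inhabits 0) (fun n => e n = k) (Hall k)), E.
  exact (epsilon_spec (inhabits 0) (fun n => e n = k') (Hall k')).
Qed.

Lemma omega_seq_bounded (s : nat -> K) : exists g, forall n, lt (s n) g.
Proof.
  destruct omega_injects_below as [a [e [Hinj He]]].
  pose (index := fun b : seg lt a => epsilon (inhabits 0) (fun n => e n = proj1_sig b)).
  destruct (Hreg a (fun b => s (index b))) as [g Hg]. exists g. intro n.
  replace n with (index (exist _ (e n) (He n))) at 1; [apply Hg|].
  apply Hinj. exact (epsilon_spec (inhabits 0) (fun m => e m = e n) (ex_intro _ n eq_refl)).
Qed.

Section ContinuousMap.
Context {M : Type} {T : node lt K -> Prop}.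
Variable c : (K -> M) -> branches T.
Hypothesis M_inh : inhabited M.

Definition branch (z : K -> M) : K -> K := proj1_sig (c z).

Definition img (u : node lt M) (y : K -> K) : Prop := exists z, N u z /\ branch z = y.

(* Witnesses [|c[N_u]| <= mu^{<kappa}]. *)
Definition small (u : node lt M) : Prop :=
  exists g : (K -> K) -> node lt M,
    (forall y y', img u y -> img u y' -> g y = g y' -> y = y') /\
    (forall y, img u y -> prefix u (g y)).

Definition big_above (t : node lt M) (z : K -> M) : Prop :=
  N t z /\ forall b, le lt (len t) b -> ~ small (restr lt z b).

Definition big_img (t : node lt M) (y : K -> K) : Prop := exists z, big_above t z /\ branch z = y.

Definition minimal_small (t u : node lt M) : Prop :=
  prefix t u /\ small u /\ forall v, prefix t v -> prefix v u -> small v -> v = u.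

Lemma big_root (HK : inhabited K) : ~ le_card (branches T) (node lt M) ->
  (forall y, exists z, c z = y) -> exists r, ~ small r.
Proof.
  intros Hcard Hsurj. destruct (empty_node_exists (X := M) HK) as [r Hr]. exists r. intros [g [Hinj _]].
  assert (Himg : forall y : branches T, img r (proj1_sig y)).
  { intro y. destruct (Hsurj y) as [z Hz]. exists z. split; [apply Hr | unfold branch; rewrite Hz; reflexivity]. }
  apply Hcard. exists (fun y => g (proj1_sig y)). intros y y' E.
  pose proof (Hinj _ _ (Himg y) (Himg y') E) as Hyy'.
  destruct y as [y Hy], y' as [y' Hy']. simpl in Hyy'. subst y'. f_equal. apply proof_irrelevance.
Qed.

Lemma domain_inhabited (HK : inhabited K) : le_card (node lt M) (branches T) ->
  (forall y, exists z, c z = y) -> inhabited M.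
Proof.
  intros [f _] Hsurj. destruct HK as [k]. destruct (empty_node_exists (X := M) (inhabits k)) as [r _].
  destruct (Hsurj (f r)) as [z _]. exact (inhabits (z k)).
Qed.

Lemma minimal_small_exists t y : img t y -> ~ big_img t y -> exists u, minimal_small t u /\ img u y.
Proof.
  intros [z [Hz Hzy]] Hnb.
  assert (Hex : exists b, le lt (len t) b /\ small (restr lt z b)).
  { apply NNPP; intro H. apply Hnb. exists z. split; [split; [exact Hz|] | exact Hzy].
    intros b hb hs. apply H. eauto. }
  destruct (least_exists _ Hex) as [b [[Hb Hs] Hmin]].
  exists (restr lt z b). split; [split; [|split]|].
  - exact (prefix_restr _ _ _ Hz Hb).
  - exact Hs.
  - intros v Htv Hvu Hv. pose proof (prefix_restr_eq _ _ _ Hvu) as E. rewrite E. f_equal.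
    apply le_antisym; [exact (proj1 Hvu)|]. apply Hmin. split; [exact (proj1 Htv)|]. rewrite <- E. exact Hv.
  - exists z. split; [apply N_restr | exact Hzy].
Qed.

Lemma minimal_small_compatible_eq t u u' w :
  minimal_small t u -> minimal_small t u' -> prefix u w -> prefix u' w -> u = u'.
Proof.
  intros Hu Hu' Huw Hu'w. destruct (le_total (len u) (len u')) as [h|h].
  - apply (proj2 (proj2 Hu') u); [apply Hu | exact (prefix_of_common _ _ _ Huw Hu'w h) | apply Hu].
  - symmetry. apply (proj2 (proj2 Hu) u'); [apply Hu' | exact (prefix_of_common _ _ _ Hu'w Huw h) | apply Hu'].
Qed.

Lemma big_above_avoids_minimal_small t u z b :
  big_above t z -> minimal_small t u -> ~ prefix u (restr lt z b).
Proof.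
  intros [_ Hz] [Htu [Hu _]] Hub. apply (Hz (len u) (proj1 Htu)).
  rewrite <- (prefix_restr_eq _ _ _ Hub). exact Hu.
Qed.

Lemma residual_injection t : exists g : (K -> K) -> node lt M,
  (forall y y', img t y -> ~ big_img t y -> img t y' -> ~ big_img t y' -> g y = g y' -> y = y') /\
  (forall y, img t y -> ~ big_img t y -> exists u, minimal_small t u /\ prefix u (g y)).
Proof.
  destruct (partial_choice (fun y => img t y /\ ~ big_img t y)
              (fun y u => minimal_small t u /\ img u y) (inhabits t)) as [Um HUm].
  { intros y [Hy Hny]. exact (minimal_small_exists _ _ Hy Hny). }
  destruct (partial_choice small (fun u g =>
              (forall y y', img u y -> img u y' -> g y = g y' -> y = y') /\
              (forall y, img u y -> prefix u (g y))) (inhabits (fun _ => t))) as [G HG].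
  { intros u Hu. exact Hu. }
  exists (fun y => G (Um y) y). split.
  - intros y y' Hy Hny Hy' Hny' E.
    destruct (HUm y (conj Hy Hny)) as [Hu Hyu]. destruct (HUm y' (conj Hy' Hny')) as [Hu' Hyu'].
    destruct (HG _ (proj1 (proj2 Hu))) as [Hinj Hpre]. destruct (HG _ (proj1 (proj2 Hu'))) as [_ Hpre'].
    assert (Eu : Um y = Um y').
    { apply (minimal_small_compatible_eq t _ _ _ Hu Hu' (Hpre y Hyu)). rewrite E. exact (Hpre' y' Hyu'). }
    apply Hinj; [exact Hyu | rewrite Eu; exact Hyu' | rewrite E, Eu; reflexivity].
  - intros y Hy Hny. destruct (HUm y (conj Hy Hny)) as [Hu Hyu].
    exists (Um y). split; [exact Hu | exact (proj2 (HG _ (proj1 (proj2 Hu))) y Hyu)].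
Qed.

Lemma big_img_injection t xi (f : K -> K -> K) :
  (forall y, big_img t y -> exists e, lt e xi /\ f e = y) ->
  exists g : (K -> K) -> node lt M,
    (forall y y', big_img t y -> big_img t y' -> g y = g y' -> y = y') /\
    (forall y, big_img t y -> exists z b, big_above t z /\ le lt (len t) b /\ g y = restr lt z b).
Proof.
  intros Hcov. destruct (injection_above (len t)) as [h [Hh Hinj]].
  destruct (partial_choice (big_img t) (fun y z => big_above t z /\ branch z = y)) as [Zb HZb].
  { destruct M_inh as [m]. exact (inhabits (fun _ => m)). }
  { intros y Hy. exact Hy. }
  destruct (partial_choice (big_img t) (fun y e => lt e xi /\ f e = y) (inhabits xi) Hcov) as [E HE].
  exists (fun y => restr lt (Zb y) (h (E y))). split.
  - intros y y' Hy Hy' Eg. rewrite <- (proj2 (HE y Hy)), <- (proj2 (HE y' Hy')). f_equal.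
    apply Hinj. exact (f_equal (fun u => len u) Eg).
  - intros y Hy. exists (Zb y), (h (E y)). split; [exact (proj1 (HZb y Hy)) | split; [apply Hh | reflexivity]].
Qed.

Lemma small_of_covered_big_img t xi (f : K -> K -> K) :
  (forall y, big_img t y -> exists e, lt e xi /\ f e = y) -> small t.
Proof.
  intros Hcov.
  destruct (big_img_injection t xi f Hcov) as [g1 [Hinj1 Hg1]].
  destruct (residual_injection t) as [g2 [Hinj2 Hg2]].
  exists (fun y => if excluded_middle_informative (big_img t y) then g1 y else g2 y). split.
  - intros y y' Hy Hy'.
    destruct (excluded_middle_informative (big_img t y)) as [b|nb];
    destruct (excluded_middle_informative (big_img t y')) as [b'|nb']; intro E.
    + exact (Hinj1 _ _ b b' E).
    + destruct (Hg1 y b) as [z [beta [Hz [_ Hzb]]]]. destruct (Hg2 y' Hy' nb') as [u [Hu Hug]].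
      rewrite <- E, Hzb in Hug. destruct (big_above_avoids_minimal_small _ _ _ _ Hz Hu Hug).
    + destruct (Hg1 y' b') as [z [beta [Hz [_ Hzb]]]]. destruct (Hg2 y Hy nb) as [u [Hu Hug]].
      rewrite E, Hzb in Hug. destruct (big_above_avoids_minimal_small _ _ _ _ Hz Hu Hug).
    + exact (Hinj2 _ _ Hy nb Hy' nb' E).
  - intros y Hy. destruct (excluded_middle_informative (big_img t y)) as [b|nb].
    + destruct (Hg1 y b) as [z [beta [[Hz _] [Hb ->]]]]. exact (prefix_restr _ _ _ Hz Hb).
    + destruct (Hg2 y Hy nb) as [u [[Htu _] Hug]]. exact (prefix_trans _ _ _ Htu Hug).
Qed.

Lemma big_img_large t : ~ small t ->
  forall xi (f : K -> K -> K), exists y, big_img t y /\ forall e, lt e xi -> f e <> y.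
Proof.
  intros Ht xi f. apply NNPP; intro Hn. apply Ht, (small_of_covered_big_img t xi f).
  intros y Hy. apply NNPP; intro Hy'. apply Hn. exists y. split; [exact Hy|].
  intros e he E. apply Hy'. eauto.
Qed.

Lemma big_branches t : ~ small t -> exists zs : K -> K -> M,
  (forall a, big_above t (zs a)) /\ (forall a a', branch (zs a) = branch (zs a') -> a = a').
Proof.
  intros Ht.
  destruct (transfinite_injection (big_img t) (inhabits (fun _ => len t)) (big_img_large t Ht))
    as [F [HF Finj]].
  destruct (choice (fun a z => big_above t z /\ branch z = F a) HF) as [zs Hzs].
  exists zs. split; [intro a; apply Hzs|].
  intros a a' E. apply Finj. rewrite <- (proj2 (Hzs a)), <- (proj2 (Hzs a')). exact E.
Qed.

Definition determined_below (u : node lt M) (l : K) : Prop :=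
  forall z z', N u z -> N u z' -> forall d, lt d l -> branch z d = branch z' d.

Definition separated_below (u v : node lt M) (l : K) : Prop :=
  forall z z', N u z -> N v z' -> exists d, lt d l /\ branch z d <> branch z' d.

Definition splitting (u : node lt M) (nu l : K) (w : K -> node lt M) : Prop :=
  (forall a, prefix u (w a) /\ ~ small (w a) /\ determined_below (w a) l) /\
  (forall a a', lt a nu -> lt a' nu -> a <> a' -> separated_below (w a) (w a') l).

Hypothesis Hc : continuous c.

Lemma continuous_determined_below z l b0 :
  exists b, le lt b0 b /\ determined_below (restr lt z b) l.
Proof.
  pose (V := fun y : K -> K => forall d, lt d l -> y d = branch z d).
  assert (HV : open lt V).
  { intros y Hy. exists (restr lt y l). split; [apply N_restr|].
    intros y' Hy' d hd. rewrite <- (Hy' d hd). exact (Hy d hd). }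
  destruct (Hc V HV z) as [s [Hs Hs']]; [intros d _; reflexivity|].
  destruct (upper_bound2 b0 (len s)) as [b [Hb0 Hbs]].
  exists b. split; [exact Hb0|].
  assert (Hstable : forall z', N (restr lt z b) z' -> forall d, lt d l -> branch z' d = branch z d).
  { intros z' Hz'. apply Hs'. exact (N_prefix _ _ _ (prefix_restr _ _ _ Hs Hbs) Hz'). }
  intros z1 z2 H1 H2 d hd. rewrite (Hstable z1 H1 d hd), (Hstable z2 H2 d hd). reflexivity.
Qed.

Lemma split_node u nu : ~ small u ->
  exists g, forall l, lt g l -> exists w, splitting u nu l w.
Proof.
  intros Hu. destruct (big_branches u Hu) as [zs [Hbig Hinj]].
  destruct (separation_bound (fun a => branch (zs a)) Hinj nu) as [g Hg].
  exists g. intros l Hgl.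
  destruct (choice (fun a b => le lt (len u) b /\ determined_below (restr lt (zs a) b) l)) as [b Hb].
  { intro a. apply continuous_determined_below. }
  exists (fun a => restr lt (zs a) (b a)). split.
  - intro a. destruct (Hbig a) as [HN Hgood]. destruct (Hb a) as [Hba Hdet].
    split; [exact (prefix_restr _ _ _ HN Hba) | split; [exact (Hgood _ Hba) | exact Hdet]].
  - intros a a' ha ha' hne z z' Hz Hz'.
    destruct (Hg a a' ha ha' hne) as [d [hd Hd]].
    assert (hdl : lt d l) by exact (lt_trans _ _ _ hd Hgl).
    exists d. split; [exact hdl|].
    rewrite (proj2 (Hb a) z (zs a) Hz (N_restr _ _) d hdl).
    rewrite (proj2 (Hb a') z' (zs a') Hz' (N_restr _ _) d hdl). exact Hd.
Qed.

Variable U : K -> Prop.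
Hypothesis HU : unbounded lt U.

(* Stage [n]: [t x] depends only on [x|n]; only [L m] for [m <= n] is meaningful. *)
Record approx (n : nat) (L : nat -> K) (t : (nat -> K) -> node lt M) : Prop := {
  approx_U : forall m, m <= n -> U (L m);
  approx_incr : forall m, m < n -> lt (L m) (L (S m));
  approx_dep : depends n t;
  approx_big : forall x, in_box L n x -> ~ small (t x);
  approx_det : forall x, in_box L n x -> determined_below (t x) (L n) }.

Record refines (n : nat) (L : nat -> K) (t : (nat -> K) -> node lt M)
    (L' : nat -> K) (t' : (nat -> K) -> node lt M) : Prop := {
  refines_L : forall m, m <= n -> L' m = L m;
  refines_prefix : forall x, in_box L (S n) x -> prefix (t x) (t' x);
  refines_sep : forall x y, in_box L (S n) x -> in_box L (S n) y ->
    (forall m, m < n -> x m = y m) -> x n <> y n -> separated_below (t' x) (t' y) (L' (S n)) }.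

Lemma approx_init r : ~ small r -> exists L t, approx 0 L t.
Proof.
  intros Hr. destruct (big_branches r Hr) as [zs [Hbig _]].
  destruct (HU (len r)) as [l [Hl _]].
  destruct (continuous_determined_below (zs l) l (len r)) as [b [Hb Hdet]].
  exists (fun _ => l), (fun _ => restr lt (zs l) b). constructor.
  - intros; exact Hl.
  - intros m hm; lia.
  - intros x y _; reflexivity.
  - intros x _. exact (proj2 (Hbig l) b Hb).
  - intros x _. exact Hdet.
Qed.

Lemma approx_extend n L t l (W : node lt M -> K -> node lt M) :
  approx n L t -> U l -> lt (L n) l ->
  (forall x, in_box L n x -> splitting (t x) (L n) l (W (t x))) ->
  approx (S n) (upd L (S n) l) (fun x => W (t x) (x n)) /\
  refines n L t (upd L (S n) l) (fun x => W (t x) (x n)).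
Proof.
  intros [HUL Hinc Hdep _ _] Hl HLl HW.
  assert (Hbox : forall x, in_box (upd L (S n) l) (S n) x -> in_box L n x).
  { intros x Hx m hm. rewrite <- (upd_ne L (S n) l m) by lia. apply Hx. lia. }
  assert (Hbox' : forall x, in_box L (S n) x -> in_box L n x).
  { intros x Hx m hm. apply Hx. lia. }
  split; constructor.
  - intros m hm. destruct (Nat.eq_dec m (S n)) as [->|hne]; [rewrite upd_eq; exact Hl|].
    rewrite upd_ne by exact hne. apply HUL. lia.
  - intros m hm. rewrite (upd_ne L (S n) l m) by lia.
    destruct (Nat.eq_dec m n) as [->|hne]; [rewrite upd_eq; exact HLl|].
    rewrite upd_ne by lia. apply Hinc. lia.
  - intros x y Hxy. rewrite (Hdep x y) by (intros m hm; apply Hxy; lia).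
    rewrite (Hxy n) by lia. reflexivity.
  - intros x Hx. exact (proj1 (proj2 (proj1 (HW x (Hbox x Hx)) (x n)))).
  - intros x Hx. rewrite upd_eq. exact (proj2 (proj2 (proj1 (HW x (Hbox x Hx)) (x n)))).
  - intros m hm. apply upd_ne. lia.
  - intros x Hx. exact (proj1 (proj1 (HW x (Hbox' x Hx)) (x n))).
  - intros x y Hx Hy Hxy hne. rewrite upd_eq.
    rewrite (Hdep y x) by (intros m hm; symmetry; exact (Hxy m hm)).
    exact (proj2 (HW x (Hbox' x Hx)) (x n) (y n)
             (Hx n (Nat.lt_succ_diag_r n)) (Hy n (Nat.lt_succ_diag_r n)) hne).
Qed.

Lemma approx_step n L t : approx n L t -> exists L' t', approx (S n) L' t' /\ refines n L t L' t'.
Proof.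
  intros Ha. pose proof Ha as [_ _ Hdep Hbig _].
  destruct (partial_choice (fun u => ~ small u)
              (fun u g => forall l, lt g l -> exists w, splitting u (L n) l w)
              (inhabits (L n)) (fun u Hu => split_node u (L n) Hu)) as [G HG].
  destruct (box_bounded L n (fun x => G (t x))) as [B HB].
  { intros x y Hxy. rewrite (Hdep x y Hxy). reflexivity. }
  destruct (upper_bound2 B (L n)) as [m [HBm HLm]].
  destruct (HU m) as [l [Hl Hml]].
  destruct (partial_choice (fun u => ~ small u /\ lt (G u) l) (fun u w => splitting u (L n) l w)
              (inhabits (fun _ => t (fun _ => l)))) as [W HW].
  { intros u [Hu Hgu]. exact (HG u Hu l Hgu). }
  exists (upd L (S n) l), (fun x => W (t x) (x n)).
  apply (approx_extend n L t l W Ha Hl (le_lt_trans _ _ _ HLm Hml)).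
  intros x Hx. apply HW. split; [exact (Hbig x Hx)|].
  exact (lt_trans _ _ _ (HB x Hx) (le_lt_trans _ _ _ HBm Hml)).
Qed.

Record fusion (lam : nat -> K) (t : nat -> (nat -> K) -> node lt M) : Prop := {
  fusion_U : forall n, U (lam n);
  fusion_incr : forall n, lt (lam n) (lam (S n));
  fusion_dep : forall n, depends n (t n);
  fusion_prefix : forall n x, in_prod lam x -> prefix (t n x) (t (S n) x);
  fusion_det : forall n x, in_prod lam x -> determined_below (t n x) (lam n);
  fusion_sep : forall n x y, in_prod lam x -> in_prod lam y ->
    (forall m, m < n -> x m = y m) -> x n <> y n ->
    separated_below (t (S n) x) (t (S n) y) (lam (S n)) }.

Section Diagonal.
Variables (Ls : nat -> nat -> K) (ts : nat -> (nat -> K) -> node lt M).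
Hypothesis Happrox : forall n, approx n (Ls n) (ts n).
Hypothesis Hrefines : forall n, refines n (Ls n) (ts n) (Ls (S n)) (ts (S n)).

Lemma diagonal_stable k m : m <= k -> Ls k m = Ls m m.
Proof.
  induction k as [|k IH]; intro h.
  - replace m with 0 by lia. reflexivity.
  - destruct (Nat.eq_dec m (S k)) as [->|hne]; [reflexivity|].
    rewrite (refines_L _ _ _ _ _ (Hrefines k) m) by lia. apply IH. lia.
Qed.

Lemma in_box_diagonal k j x : j <= S k -> in_prod (fun m => Ls m m) x -> in_box (Ls k) j x.
Proof. intros hj Hx m hm. rewrite diagonal_stable by lia. apply Hx. Qed.

Lemma fusion_diagonal : fusion (fun m => Ls m m) ts.
Proof.
  constructor.
  - intro n. exact (approx_U _ _ _ (Happrox n) n (le_n n)).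
  - intro n. pose proof (approx_incr _ _ _ (Happrox (S n)) n (Nat.lt_succ_diag_r n)) as H.
    rewrite diagonal_stable in H by lia. exact H.
  - intro n. exact (approx_dep _ _ _ (Happrox n)).
  - intros n x Hx. exact (refines_prefix _ _ _ _ _ (Hrefines n) x (in_box_diagonal n (S n) x (le_n _) Hx)).
  - intros n x Hx.
    exact (approx_det _ _ _ (Happrox n) x (in_box_diagonal n n x (Nat.le_succ_diag_r n) Hx)).
  - intros n x y Hx Hy.
    exact (refines_sep _ _ _ _ _ (Hrefines n) x y
             (in_box_diagonal n (S n) x (le_n _) Hx) (in_box_diagonal n (S n) y (le_n _) Hy)).
Qed.

End Diagonal.

Lemma fusion_exists r : ~ small r -> exists lam t, fusion lam t.
Proof.
  intros Hr.
  destruct (nat_dependent_choice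
              (fun n (s : (nat -> K) * ((nat -> K) -> node lt M)) => approx n (fst s) (snd s))
              (fun n s s' => refines n (fst s) (snd s) (fst s') (snd s'))) as [f Hf].
  - destruct (approx_init r Hr) as [L [t H]]. exists (L, t). exact H.
  - intros n [L t] H. destruct (approx_step n L t H) as [L' [t' H']]. exists (L', t'). exact H'.
  - exists (fun m => fst (f m) m), (fun n => snd (f n)).
    exact (fusion_diagonal (fun n => fst (f n)) (fun n => snd (f n))
             (fun n => proj1 (Hf n)) (fun n => proj2 (Hf n))).
Qed.

Section Limit.
Variables (lam : nat -> K) (t : nat -> (nat -> K) -> node lt M).
Hypothesis Hf : fusion lam t.

Lemma fusion_lam_le m n : m <= n -> le lt (lam m) (lam n).
Proof.
  induction 1 as [|k _ IH]; [apply le_refl | exact (le_trans _ _ _ IH (or_introl (fusion_incr _ _ Hf k)))].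
Qed.

Lemma fusion_limit : exists Z : (nat -> K) -> K -> M,
  forall x, in_prod lam x -> forall n, N (t n x) (Z x).
Proof.
  apply (partial_choice (in_prod lam) (fun x z => forall n, N (t n x) z)); [destruct M_inh as [m]; exact (inhabits (fun _ => m))|].
  intros x Hx. apply (chain_limit (fun n => t n x) M_inh).
  intro n. exact (fusion_prefix _ _ Hf n x Hx).
Qed.

Lemma fusion_limit_agree (Z : (nat -> K) -> K -> M) :
  (forall x, in_prod lam x -> forall n, N (t n x) (Z x)) ->
  forall x y n, in_prod lam x -> in_prod lam y ->
    (forall m, m < n -> x m = y m) <-> (forall d, lt d (lam n) -> branch (Z x) d = branch (Z y) d).
Proof.
  intros HZ x y n Hx Hy. split.
  - intros Hxy d hd. pose proof (fusion_dep _ _ Hf n x y Hxy) as E.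
    apply (fusion_det _ _ Hf n x Hx); [exact (HZ x Hx n) | rewrite E; exact (HZ y Hy n) | exact hd].
  - intros Hagree.
    assert (H : forall k, k <= n -> forall m, m < k -> x m = y m).
    { induction k as [|k IH]; intros hk m hm; [lia|].
      destruct (Nat.eq_dec m k) as [->|hne]; [|apply IH; lia].
      apply NNPP; intro hne.
      destruct (fusion_sep _ _ Hf k x y Hx Hy (IH ltac:(lia)) hne (Z x) (Z y)
                  (HZ x Hx (S k)) (HZ y Hy (S k))) as [d [hd Hd]].
      apply Hd, Hagree. exact (lt_le_trans _ _ _ hd (fusion_lam_le (S k) n hk)). }
    exact (H n (le_n n)).
Qed.

Lemma fusion_embedding l : (forall n, le lt (lam n) l) ->
  exists i : (forall n, seg lt (lam n)) -> (seg lt l -> K),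
    (forall x, T (existT (fun a => seg lt a -> K) l (i x))) /\
    (forall x y, i x = i y -> x = y) /\
    (forall x y n, (forall m, m < n -> x m = y m) <->
       (forall d (h : lt d l), lt d (lam n) -> i x (exist _ d h) = i y (exist _ d h))).
Proof.
  intros Hl. destruct fusion_limit as [Z HZ].
  pose (xs := fun (x : forall n, seg lt (lam n)) m => proj1_sig (x m)).
  assert (Hxs : forall x, in_prod lam (xs x)) by (intros x m; exact (proj2_sig (x m))).
  assert (Hiff : forall x y n, (forall m, m < n -> x m = y m) <->
            (forall d (h : lt d l), lt d (lam n) -> branch (Z (xs x)) d = branch (Z (xs y)) d)).
  { intros x y n. pose proof (fusion_limit_agree Z HZ (xs x) (xs y) n (Hxs x) (Hxs y)) as Hagree.
    split.
    - intros Hxy d h. apply Hagree. intros m hm. unfold xs. rewrite (Hxy m hm). reflexivity.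
    - intros Hxy m hm.
      assert (E : xs x m = xs y m).
      { apply (proj2 Hagree); [|exact hm]. intros d hd. exact (Hxy d (lt_le_trans _ _ _ hd (Hl n)) hd). }
      unfold xs in E. destruct (x m) as [a ha], (y m) as [b hb]. simpl in E. subst b.
      f_equal. apply proof_irrelevance. }
  exists (fun x d => branch (Z (xs x)) (proj1_sig d)). split; [|split].
  - intro x. exact (proj2_sig (c (Z (xs x))) l).
  - intros x y E. apply functional_extensionality_dep. intro m.
    apply (proj2 (Hiff x y (S m))); [|lia].
    intros d h _. exact (f_equal (fun i => i (exist _ d h)) E).
  - exact Hiff.
Qed.


End Limit.
End ContinuousMap.
End Kappa.

Theorem theorem7p1
  (K : Type) (lt : K -> K -> Prop)
  (Hkappa : uncountable_regular_cardinal lt)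
  (U : K -> Prop) (HU : unbounded lt U)
  (T : node lt K -> Prop) (HT : subtree T)
  (M : Type)
  (Hcard : lt_card (node lt M) (branches T))
  (c : (K -> M) -> branches T)
  (Hc : continuous c)
  (Hsurj : forall b : branches T, exists z, c z = b) :
  exists (lam : nat -> K) (l : K),
    (forall n, U (lam n)) /\
    (forall n, lt (lam n) (lam (S n))) /\
    (forall n, le lt (lam n) l) /\
    (forall b, (forall n, le lt (lam n) b) -> le lt l b) /\
    exists i : (forall n, seg lt (lam n)) -> (seg lt l -> K),
      (forall x, T (existT (fun a => seg lt a -> K) l (i x))) /\
      (forall x y, i x = i y -> x = y) /\
      (forall x y n,
         (forall m, m < n -> x m = y m) <->
         (forall d (h : lt d l), lt d (lam n) -> i x (exist _ d h) = i y (exist _ d h))).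
Proof.
  destruct Hkappa as [Hwo [_ [Hunc Hreg]]].
  assert (Hnomax : forall a, exists b, lt a b) by (intro a; destruct (HU a) as [b [_ hb]]; eauto).
  pose proof (uncountable_inhabited Hunc) as HK.
  pose proof (domain_inhabited Hwo c HK (proj1 Hcard) Hsurj) as HM.
  destruct (big_root Hwo c HK (proj2 Hcard) Hsurj) as [r Hr].
  destruct (fusion_exists Hwo Hreg Hnomax c HM Hc U HU r Hr) as [lam [t Hf]].
  destruct (omega_seq_bounded Hwo Hreg Hnomax Hunc lam) as [g Hg].
  destruct (least_exists Hwo (fun b => forall n, le lt (lam n) b)) as [l [Hl Hlmin]].
  { exists g. intro n. left. apply Hg. }
  exists lam, l. split; [exact (fusion_U c U lam t Hf)|].
  split; [exact (fusion_incr c U lam t Hf)|].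
  split; [exact Hl|]. split; [exact Hlmin|].
  exact (fusion_embedding Hwo c HM U lam t Hf l Hl).
Qed.
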